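(* Let $L$ be a Lelek fan, let $C\subseteq L$ be a subcontinuum of $L$ that is a Cantor fan, and let $f:L\to L$ be an embedding with $f(L)\subseteq C$. Then $f$ does not admit a retraction, i.e. there is no retraction from $L$ onto $f(L)$.
   Context: A continuum is a nonempty compact connected metric space. A dendroid is an arcwise connected, hereditarily unicoherent continuum. A point $x$ of a dendroid $X$ is a ramification point if $x$ is the top (the branch point) of some simple triod in $X$. A fan is a dendroid with at most one ramification point; this point, if it exists, is called the top of the fan. For a fan $X$, a point $x$ is an end point of $X$ if $x$ is an end point of every arc in $X$ containing $x$; $E(X)$ denotes the set of end points of $X$. A fan $X$ with top $v$ is smooth if for every $x\in X$ and every sequence $x_n\to x$ in $X$, the arcs from $v$ to $x_n$ converge (in the Hausdorff metric) to the arc from $v$ to $x$. A Lelek fan is a smooth fan $X$ with $\mathrm{Cl}(E(X))=X$. A Cantor fan is a continuum homeomorphic to $\bigcup_{c\in C}A_c\subseteq\mathbb R^2$, where $C\subseteq[0,1]$ is the Cantor middle-third set and $A_c$ is the straight segment from $(\tfrac12,0)$ to $(c,1)$. An embedding is a continuous map that is a homeomorphism onto its image. A retraction from a space $X$ onto a subspace $Y$ is a continuous map $r:X\to Y$ with $r(y)=y$ for all $y\in Y$; an embedding $f:X\to Z$ admits a retraction if there is a retraction from $Z$ onto $f(X)$. *)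

From HB Require Import structures.
From mathcomp Require Import all_boot all_order all_algebra.
From mathcomp Require Import all_classical all_reals all_analysis.
Set Implicit Arguments. Unset Strict Implicit. Unset Printing Implicit Defensive.
Import Order.TTheory GRing.Theory Num.Theory.
Import numFieldNormedType.Exports.
Local Open Scope classical_set_scope.
Local Open Scope ring_scope.

Section Embed.
Context {U V : topologicalType}.
Definition embed_on (A : set U) (g : U -> V) : Prop :=
  {within A, continuous g} /\
  (forall x y, A x -> A y -> g x = g y -> x = y) /\
  exists h : V -> U, {within g @` A, continuous h} /\ (forall x, A x -> h (g x) = x).
End Embed.

Definition unit_interval (R : realType) : set R := [set t : R | 0 <= t <= 1].

Section Continua.
Context {R : realType} {T : pseudoMetricType R}.

Definition continuum (A : set T) : Prop :=
  A !=set0 /\ compact A /\ connected A.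

Definition arc_from (a b : T) (A : set T) : Prop :=
  exists g : R -> T, embed_on (@unit_interval R) g /\
    g @` (@unit_interval R) = A /\ g 0 = a /\ g 1 = b.

Definition arc (A : set T) : Prop := exists a b, arc_from a b A.

Definition arc_end (A : set T) (x : T) : Prop := exists b, arc_from x b A.

Definition arcwise_connected (X : set T) : Prop :=
  forall x y, X x -> X y -> x <> y -> exists A, A `<=` X /\ arc_from x y A.

Definition hered_unicoherent (X : set T) : Prop :=
  forall P Q, P `<=` X -> Q `<=` X -> continuum P -> continuum Q ->
    connected (P `&` Q).

Definition dendroid (X : set T) : Prop :=
  continuum X /\ arcwise_connected X /\ hered_unicoherent X.

(* x is the top of a simple triod contained in X *)
Definition ramification_point (X : set T) (x : T) : Prop :=
  exists (a1 a2 a3 : T) (A1 A2 A3 : set T),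
    [/\ arc_from x a1 A1, arc_from x a2 A2 & arc_from x a3 A3] /\
    [/\ A1 `&` A2 = [set x], A1 `&` A3 = [set x] & A2 `&` A3 = [set x]] /\
    A1 `|` A2 `|` A3 `<=` X.

Definition fan (X : set T) : Prop :=
  dendroid X /\
  (forall x y, ramification_point X x -> ramification_point X y -> x = y).

Definition end_points (X : set T) : set T :=
  [set x | X x /\ forall A, arc A -> A `<=` X -> A x -> arc_end A x].

Definition arc_in (X : set T) (a b : T) (B : set T) : Prop :=
  (a = b /\ B = [set a]) \/ (a <> b /\ B `<=` X /\ arc_from a b B).

Definition eps_nbhd (B : set T) (e : R) : set T :=
  [set y | exists2 b, B b & ball b e y].

Definition hausdorff_cvg (Bn : nat -> set T) (B : set T) : Prop :=
  forall e : R, 0 < e -> exists N : nat, forall n : nat, (N <= n)%N ->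
    Bn n `<=` eps_nbhd B e /\ B `<=` eps_nbhd (Bn n) e.

Definition smooth_fan (X : set T) : Prop :=
  fan X /\ exists v, ramification_point X v /\
    forall (x : T) (u : nat -> T), (forall n, X (u n)) -> X x ->
      u @ \oo --> x ->
      forall (Bn : nat -> set T) (B : set T),
        (forall n, arc_in X v (u n) (Bn n)) -> arc_in X v x B ->
        hausdorff_cvg Bn B.

Definition lelek_fan (X : set T) : Prop :=
  smooth_fan X /\ closure (end_points X) = X.
End Continua.

Section CantorFan.
Context {R : realType}.

Fixpoint cantor_approx (n : nat) : set R :=
  match n with
  | 0 => @unit_interval R
  | n'.+1 => ((fun x => x / 3) @` cantor_approx n') `|`
             ((fun x => 2 / 3 + x / 3) @` cantor_approx n')
  end.

Definition cantor_set : set R := \bigcap_(n in [set: nat]) cantor_approx n.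

Definition fan_segment (c : R) : set (R * R) :=
  [set ((1 - t) * (1 / 2) + t * c, t) | t in @unit_interval R].

Definition cantor_fan_model : set (R * R) :=
  \bigcup_(c in cantor_set) fan_segment c.

Definition cantor_fan {T : topologicalType} (A : set T) : Prop :=
  exists g : R * R -> T, embed_on cantor_fan_model g /\ g @` cantor_fan_model = A.
End CantorFan.

(* Transport everything to the planar model of the Cantor fan: [f] becomes
   an embedding [phi] of the Lelek fan into the model, and a retraction onto
   the range of [f] becomes a retraction [rho] of the model onto the image [K]
   of [phi].  Off its top the model is a disjoint union of segments (legs)
   indexed by the Cantor set, which is totally disconnected, so a path that
   avoids the top stays in one leg; hence [K], being arcwise connected,
   contains a nondegenerate segment of some leg.  End points are dense, so
   some end point [e] has [phi e] near the middle of that segment.  An arc to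
   [e] from a point over the bottom of the segment covers the part of the leg
   of [phi e] just below [phi e]; and [rho], which fixes the segment and hence
   barely moves heights on nearby legs, maps the part just above [phi e] to a
   path climbing strictly higher without reaching the top.  So [phi e] lies
   inside a segment of [K], whose preimage is an arc through [e] that [e] does
   not end. *)

From Pilot Require Import Defs.
From mathcomp Require Import all_boot all_order all_algebra.
From mathcomp Require Import all_classical all_reals all_analysis.
From mathcomp Require Import ring lra.

Import Order.TTheory GRing.Theory Num.Theory Num.Def.
Import numFieldNormedType.Exports.
Local Open Scope classical_set_scope.
Local Open Scope ring_scope.
Set Implicit Arguments. Unset Strict Implicit. Unset Printing Implicit Defensive.

Section CantorSet.
Context {R : realType}.

Lemma cantor_approx_itv n (x : R) : cantor_approx n x -> 0 <= x <= 1.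
Proof.
elim: n x => [//|n IH] x /=.
by case=> -[a /IH /andP[a0 a1] <-]; apply/andP; split; lra.
Qed.

Lemma cantor_set_itv (x : R) : cantor_set x -> 0 <= x <= 1.
Proof. by move=> cx; apply: (@cantor_approx_itv 0); exact: (cx 0%N I). Qed.

Lemma cantor_approx_gap n (x y : R) : cantor_approx n x -> cantor_approx n y ->
  x < y -> (3 ^+ n)^-1 < y - x -> exists2 d, x < d < y & ~ cantor_approx n d.
Proof.
elim: n x y => [|n IH] x y /=.
  by move=> /andP[x0 x1] /andP[y0 y1] xy; rewrite expr0 invr1; lra.
have -> : (3 ^+ n.+1 : R)^-1 = (3 ^+ n)^-1 / 3 by rewrite exprS invfM mulrC.
have p3 : (0 : R) < (3 ^+ n)^-1 by rewrite invr_gt0 exprn_gt0.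
case=> -[a Aa <-] [] -[b Ab <-] xy hd;
  have /andP[a0 a1] := cantor_approx_itv Aa; have /andP[b0 b1] := cantor_approx_itv Ab.
- have [d /andP[ad db] nd] := IH a b Aa Ab ltac:(lra) ltac:(lra).
  exists (d / 3); first by apply/andP; split; lra.
  case=> -[a' Aa' e]; have /andP[a'0 a'1] := cantor_approx_itv Aa'; last lra.
  by apply: nd; have -> : d = a' by lra.
- exists (1/2); first by apply/andP; split; lra.
  case=> -[a' Aa' e]; have /andP[a'0 a'1] := cantor_approx_itv Aa'; lra.
- lra.
- have [d /andP[ad db] nd] := IH a b Aa Ab ltac:(lra) ltac:(lra).
  exists (2/3 + d / 3); first by apply/andP; split; lra.
  case=> -[a' Aa' e]; have /andP[a'0 a'1] := cantor_approx_itv Aa'; first lra.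
  by apply: nd; have -> : d = a' by lra.
Qed.

Lemma cantor_set_gap (x y : R) : cantor_set x -> cantor_set y -> x < y ->
  exists2 d, x < d < y & ~ cantor_set d.
Proof.
move=> cx cy xy.
pose n := Num.bound ((y - x)^-1).
have n_gt : (y - x)^-1 < n%:R by apply: archi_boundP; rewrite invr_ge0 subr_ge0 ltW.
have n_le : (n%:R : R) <= 3 ^+ n by rewrite -natrX ler_nat ltnW // ltn_expl.
have gap : (3 ^+ n : R)^-1 < y - x.
  rewrite -[y - x]invrK ltf_pV2 ?posrE ?invr_gt0 ?exprn_gt0 ?subr_gt0 //.
  exact: lt_le_trans n_gt n_le.
have [d dxy nd] := cantor_approx_gap (cx n I) (cy n I) xy gap.
by exists d => // cd; apply: nd; exact: (cd n I).
Qed.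

(* Two distinct values would enclose a gap of the Cantor set, which the
   intermediate value theorem forces [h] to hit. *)
Lemma cantor_valued_const (h : R -> R) a b : a <= b -> {within `[a, b], continuous h} ->
  (forall t, a <= t <= b -> cantor_set (h t)) -> forall t, a <= t <= b -> h t = h b.
Proof.
move=> ab hc hC t /andP[a_t tb]; apply: contrapT => ne.
have sub : `[t, b] `<=` `[a, b].
  by move=> x /=; rewrite !in_itv /= => /andP[? ?]; apply/andP; split; lra.
have IVT_tb := IVT tb (continuous_subspaceW sub hc).
have hCt : cantor_set (h t) by apply: hC; lra.
have hCb : cantor_set (h b) by apply: hC; lra.
have gap_hit d : minr (h t) (h b) <= d <= maxr (h t) (h b) -> cantor_set d.
  move=> /IVT_tb [s]; rewrite in_itv /= => /andP[ts sb] <-; apply: hC; lra.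
case: (ltgtP (h t) (h b)) => [lt|gt|//].
- have [d /andP[d1 d2] nd] := cantor_set_gap hCt hCb lt.
  by apply: nd; apply: gap_hit; rewrite ge_min le_max; lra.
- have [d /andP[d1 d2] nd] := cantor_set_gap hCb hCt gt.
  by apply: nd; apply: gap_hit; rewrite ge_min le_max; lra.
Qed.

End CantorSet.

Section WithinContinuity.
Context {R : realType}.

Lemma within_continuousP (U V : pseudoMetricType R) (A : set U) (f : U -> V) :
  {within A, continuous f} <-> forall x, A x -> forall e : R, 0 < e ->
    exists2 d : R, 0 < d & forall y, A y -> ball x d y -> ball (f x) e (f y).
Proof.
rewrite subspace_continuousP; split.
- move=> fc x Ax e e0; have /cvg_ballP/(_ e e0) := fc x Ax.
  by rewrite /within /= => /nbhs_ballP [d d0 fd]; exists d => // y Ay xy; exact: fd.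
- move=> fc x Ax; apply/cvg_ballP => e e0; have [d d0 fd] := fc x Ax e e0.
  by rewrite /within /=; apply/nbhs_ballP; exists d => // y xy Ay; exact: fd.
Qed.

Lemma continuous_within_comp (U V W : pseudoMetricType R) (A : set U) (B : set V)
    (f : U -> V) (g : V -> W) :
  {within A, continuous f} -> (forall x, A x -> B (f x)) -> {within B, continuous g} ->
  {within A, continuous (g \o f)}.
Proof.
move=> /within_continuousP fc AB /within_continuousP gc.
apply/within_continuousP => x Ax e e0.
have [d1 d10 gd] := gc (f x) (AB x Ax) e e0.
have [d2 d20 fd] := fc x Ax d1 d10.
by exists d2 => // y Ay xy; apply: gd; [exact: AB|exact: fd].
Qed.

End WithinContinuity.

Section FanCoordinates.
Context {R : realType}.

(* [fan_point c t] is the point at height [t] on the segment of the model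
   from the top to [(c, 1)]; for a point [z] off the top, [fan_leg z] is the
   [c] of the segment through [z]. *)
Definition fan_point (c t : R) : R * R := ((1 - t) * (1 / 2) + t * c, t).
Definition fan_top : R * R := (1 / 2, 0).
Definition fan_leg (z : R * R) : R := (z.1 - (1 - z.2) * (1 / 2)) / z.2.

Lemma fan_point0 c : fan_point c 0 = fan_top.
Proof. by rewrite /fan_point /fan_top subr0 mul1r mul0r addr0. Qed.

Lemma fan_legK c t : t != 0 -> fan_leg (fan_point c t) = c.
Proof. by move=> t0; rewrite /fan_leg /=; field. Qed.

Lemma fan_point_model c t :
  cantor_set c -> 0 <= t <= 1 -> cantor_fan_model (fan_point c t).
Proof. by move=> cc tI; exists c => //; exists t. Qed.

Lemma cantor_fan_model_nontop z : cantor_fan_model z -> z <> fan_top ->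
  [/\ 0 < z.2, z.2 <= 1, cantor_set (fan_leg z) & z = fan_point (fan_leg z) z.2].
Proof.
case=> c cc [t /andP[t0 t1] <-]; rewrite -/(fan_point c t) => ztop.
have tn0 : t != 0 by apply: contra_notN ztop => /eqP->; rewrite fan_point0.
by rewrite /= fan_legK // lt_neqAle eq_sym tn0.
Qed.

Lemma fan_point_ball c c' t t' e : 0 <= t' <= 1 -> 0 <= c <= 1 ->
  `|c - c'| < e / 3 -> `|t - t'| < e / 3 -> ball (fan_point c t) e (fan_point c' t').
Proof.
move=> /andP[t'0 t'1] /andP[c0 c1] dc dt; split => /=; rewrite /ball /=; last by have := normr_ge0 (t - t'); lra.
have -> : (1 - t) * (1 / 2) + t * c - ((1 - t') * (1 / 2) + t' * c') =
   (t - t') * (c - 1 / 2) + t' * (c - c') by ring.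
rewrite (le_lt_trans (ler_normD _ _)) // !normrM.
have : `|c - 1 / 2| <= 1 by rewrite ler_norml; lra.
have : `|t'| <= 1 by rewrite ger0_norm.
have : 0 <= `|t - t'| by [].
have : 0 <= `|c - c'| by [].
nra.
Qed.

Lemma fan_point_continuous c : continuous (fan_point c).
Proof.
move=> t; apply: (@cvg_pair _ _ _ _ (nbhs _) (nbhs _)); last exact: cvg_id.
apply: cvgD; apply: cvgM; by [apply: cvgB; [exact: cvg_cst|exact: cvg_id]
  | exact: cvg_cst | exact: cvg_id].
Qed.

Lemma fan_leg_continuous (z : R * R) : z.2 != 0 -> {for z, continuous fan_leg}.
Proof.
move=> z2; have fst_z : (fun x : R * R => x.1) @ z --> z.1 by exact: cvg_fst.
have snd_z : (fun x : R * R => x.2) @ z --> z.2 by exact: cvg_snd.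
apply: cvgM; last exact: cvgV.
apply: cvgB => //; apply: cvgM => //; [apply: cvgB => // | ]; exact: cvg_cst.
Qed.

End FanCoordinates.

Section PathsInModel.
Context {R : realType}.
Implicit Types (phi : R -> R * R).

Lemma path_leg_const phi t0 t1 : t0 <= t1 -> {within `[t0, t1], continuous phi} ->
  (forall t, t0 <= t <= t1 -> cantor_fan_model (phi t)) ->
  (forall t, t0 <= t <= t1 -> phi t <> fan_top) ->
  forall t, t0 <= t <= t1 -> fan_leg (phi t) = fan_leg (phi t1).
Proof.
move=> t01 phic phiM phint.
apply: (cantor_valued_const (h := fan_leg \o phi)) => // [|t ht].
- apply: within_continuous_comp => // z; rewrite inE => -[t /=]; rewrite in_itv /= => ht <-.
  have [h0 _ _ _] := cantor_fan_model_nontop (phiM _ ht) (phint _ ht).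
  by apply: fan_leg_continuous; rewrite gt_eqF.
- by have [_ _ ? _] := cantor_fan_model_nontop (phiM _ ht) (phint _ ht).
Qed.

Lemma path_covers_leg (S : set (R * R)) phi t0 t1 :
  S `<=` cantor_fan_model -> t0 <= t1 -> {within `[t0, t1], continuous phi} ->
  (forall t, t0 <= t <= t1 -> S (phi t)) -> (forall t, t0 < t <= t1 -> phi t <> fan_top) ->
  forall u, 0 < u -> minr (phi t0).2 (phi t1).2 <= u <= maxr (phi t0).2 (phi t1).2 ->
  S (fan_point (fan_leg (phi t1)) u).
Proof.
move=> SM t01 phic phiS phint u u0 hu.
have height_c : {within `[t0, t1], continuous (snd \o phi)}.
  by apply: within_continuous_comp => // z _; exact: cvg_snd.
have [t] := IVT t01 height_c hu; rewrite in_itv /= => /andP[t0t tt1] phitu.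
have sub : `[t, t1] `<=` `[t0, t1].
  by move=> x /=; rewrite !in_itv /= => /andP[? ?]; apply/andP; split; lra.
have phiS' s : t <= s <= t1 -> S (phi s) by move=> /andP[? ?]; apply: phiS; lra.
have phint' s : t <= s <= t1 -> phi s <> fan_top.
  move=> /andP[ts st1]; have [->|ne] := eqVneq s t.
    by move=> phit; move: phitu; rewrite /= phit /=; lra.
  have lt_ts : t < s by rewrite lt_neqAle eq_sym ne.
  by apply: phint; apply/andP; split; lra.
have tI : t <= t <= t1 by lra.
have leg := path_leg_const tt1 (continuous_subspaceW sub phic)
  (fun s hs => SM _ (phiS' s hs)) phint' tI.
have [_ _ _ phit] := cantor_fan_model_nontop (SM _ (phiS' t tI)) (phint' t tI).
by rewrite -leg -phitu /= -phit; exact: phiS'.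
Qed.

(* Uniformity in [s] comes from the compactness of [[s1, s2]] (tube lemma). *)
Lemma fan_height_uniform (rho : R * R -> R) c s1 s2 :
  {within cantor_fan_model, continuous rho} -> cantor_set c -> 0 <= s1 -> s2 <= 1 ->
  (forall s, s1 <= s <= s2 -> rho (fan_point c s) = s) ->
  forall e, 0 < e -> exists2 d, 0 < d & forall c', cantor_set c' -> `|c - c'| < d ->
    forall s, s1 <= s <= s2 -> `|rho (fan_point c' s) - s| < e.
Proof.
move=> rhoc cc s10 s21 rho_id e e0.
have /compact_near_coveringP/near_covering_withinP cover := @segment_compact R s1 s2.
have [|d d0 hd] := cover R (nbhs c)
  (fun c' s => cantor_set c' -> `|rho (fan_point c' s) - s| < e) _.
  move=> x; rewrite /= in_itv /= => xI.
  have xM : cantor_fan_model (fan_point c x) by apply: fan_point_model => //; lra.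
  have [d d0 hd] := proj1 (within_continuousP _ _) rhoc _ xM (e / 2) ltac:(lra).
  exists (ball x (minr (d / 3) (e / 2)), ball c (d / 3)).
    by split; apply: nbhsx_ballx; rewrite ?lt_min; lra.
  case=> x' c' /= [+ cc'] + c'C; rewrite /ball /= in cc' *.
  rewrite lt_min in_itv /= => /andP[xx' xx'e] x'I.
  have x'M : cantor_fan_model (fan_point c' x') by apply: fan_point_model => //; lra.
  have x'01 : 0 <= x' <= 1 by lra.
  have := hd _ x'M (fan_point_ball x'01 (cantor_set_itv cc) cc' xx').
  rewrite rho_id; last lra.
  rewrite /ball /= distrC => rhox'.
  have -> : rho (fan_point c' x') - x' = (rho (fan_point c' x') - x) + (x - x') by ring.
  by rewrite (le_lt_trans (ler_normD _ _)) //; lra.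
by exists d => // c' c'C dc s hs; apply: (hd c') => //=; rewrite in_itv.
Qed.

End PathsInModel.

Section RealPaths.
Context {R : realType}.

Lemma unit_intervalE : @unit_interval R = `[0, 1]%classic.
Proof. by apply/seteqP; split => x /=; rewrite in_itv. Qed.

Lemma arc_from_neq (T : pseudoMetricType R) (a b : T) (A : set T) :
  arc_from a b A -> a <> b.
Proof.
have u0 : @unit_interval R 0 by rewrite /unit_interval /= lexx ler01.
have u1 : @unit_interval R 1 by rewrite /unit_interval /= lexx ler01.
case=> gam [[_ [gam_inj _]] [_ [<- <-]]] /(gam_inj _ _ u0 u1)/eqP.
by rewrite eq_sym oner_eq0.
Qed.

Lemma between_minr_maxr (a b u : R) :
  a <= u <= b \/ b <= u <= a -> minr a b <= u <= maxr a b.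
Proof. by rewrite ge_min le_max => -[] /andP[-> ->]; rewrite ?orbT. Qed.

Lemma inj_path_start_not_between (psi : R -> R) tl th :
  {within `[0, 1], continuous psi} -> {in `[0, 1] &, injective psi} ->
  tl \in `[0, 1] -> th \in `[0, 1] -> ~ (psi tl < psi 0 < psi th).
Proof.
move=> psic psi_inj; rewrite !in_itv /= => tlI thI /andP[lt_l lt_h].
have [a [b [a0 ab b1 ends aE]]] : exists a b, [/\ 0 <= a, a <= b, b <= 1,
    minr (psi a) (psi b) <= psi 0 <= maxr (psi a) (psi b) & a = tl \/ a = th].
  by case: (lerP tl th) => lh; [exists tl, th | exists th, tl];
    rewrite ge_min le_max (ltW lt_l) (ltW lt_h) ?orbT; split; (lra || tauto).
have sub : `[a, b] `<=` `[0, 1].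
  by move=> x /=; rewrite !in_itv /= => /andP[? ?]; apply/andP; split; lra.
have [t] := IVT ab (continuous_subspaceW sub psic) ends.
rewrite in_itv /= => /andP[a_t tb] /psi_inj.
rewrite !in_itv /= => /(_ ltac:(lra) ltac:(lra)) t0.
have a_eq0 : a = 0 by lra.
by move: lt_l lt_h; case: aE => <-; rewrite a_eq0 ltxx.
Qed.

End RealPaths.

Section RetractionInModel.
Variables (R : realType) (T : pseudoMetricType R).
Variables (g : R * R -> T) (g' : T -> R * R) (f f' r : T -> T).
Hypothesis g_cont : {within cantor_fan_model, continuous g}.
Hypothesis gK : forall z, cantor_fan_model z -> g' (g z) = z.
Hypothesis g'_cont : {within g @` cantor_fan_model, continuous g'}.
Hypothesis f_cont : continuous f.
Hypothesis fK : cancel f f'.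
Hypothesis f'_cont : {within range f, continuous f'}.
Hypothesis f_sub : range f `<=` g @` cantor_fan_model.
Hypothesis r_cont : continuous r.
Hypothesis r_sub : range r `<=` range f.
Hypothesis r_id : forall y, range f y -> r y = y.

Definition phi x := g' (f x).
Definition K := range phi.
Definition rho z := g' (r (g z)).

Lemma phi_model x : cantor_fan_model (phi x).
Proof. by have [z zM zE] := f_sub (imageT f x); rewrite /phi -zE gK. Qed.

Lemma g_phi x : g (phi x) = f x.
Proof. by have [z zM zE] := f_sub (imageT f x); rewrite /phi -zE gK. Qed.

Lemma phi_inj : injective phi.
Proof. by move=> x y /(congr1 g); rewrite !g_phi => /(can_inj fK). Qed.

Lemma K_model : K `<=` cantor_fan_model.
Proof. by move=> z [x _ <-]; exact: phi_model. Qed.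

Lemma K_range_f z : K z -> range f (g z).
Proof. by case=> x _ <-; rewrite g_phi; exists x. Qed.

Lemma phiK z : K z -> phi (f' (g z)) = z.
Proof. by case=> x _ <-; rewrite g_phi fK. Qed.

Lemma phi_continuous : continuous phi.
Proof.
apply/continuous_subspace_setT; apply: (continuous_within_comp (B := g @` cantor_fan_model)).
- by move: f_cont; rewrite continuous_subspace_setT.
- by move=> x _; apply: f_sub; exists x.
- exact: g'_cont.
Qed.

Lemma phi_height_continuous : continuous (fun x => (phi x).2).
Proof. by move=> x; apply: continuous_comp; [exact: phi_continuous | exact: cvg_snd]. Qed.

Lemma rho_continuous : {within cantor_fan_model, continuous rho}.
Proof.
apply: (continuous_within_comp (B := g @` cantor_fan_model)); last exact: g'_cont.
- apply: (continuous_within_comp (B := setT)) => //.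
  by move: r_cont; rewrite continuous_subspace_setT.
- by move=> z _ /=; apply: f_sub; apply: r_sub; exists (g z).
Qed.

Lemma rho_K z : K (rho z).
Proof. by have [x _ xE] := r_sub (imageT r (g z)); exists x => //; rewrite /phi xE. Qed.

Lemma rho_id z : K z -> rho z = z.
Proof. by case=> x _ <-; rewrite /rho g_phi r_id ?imageT. Qed.

Lemma leg_segment_arc c lo hi : cantor_set c -> 0 <= lo -> lo < hi -> hi <= 1 ->
  (forall u, lo <= u <= hi -> K (fan_point c u)) ->
  exists gam : R -> T, embed_on (@unit_interval R) gam /\
    forall t, unit_interval t -> phi (gam t) = fan_point c (lo + t * (hi - lo)).
Proof.
move=> cc lo0 lohi hi1 segK.
pose lin t := lo + t * (hi - lo).
have linI t : unit_interval t -> lo <= lin t <= hi.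
  by move=> /andP[t0 t1]; rewrite /lin; apply/andP; split; nra.
have lin_cont : continuous lin.
  by move=> t; apply: cvgD; [exact: cvg_cst | apply: cvgM; [exact: cvg_id | exact: cvg_cst]].
have gamK t : unit_interval t -> phi (f' (g (fan_point c (lin t)))) = fan_point c (lin t).
  by move=> /linI /segK; exact: phiK.
exists (f' \o g \o fan_point c \o lin); split; last exact: gamK.
split; [|split].
- apply: (continuous_within_comp (B := range f)) => //; last first.
    by move=> t /linI /segK /K_range_f.
  apply: (continuous_within_comp (B := cantor_fan_model)) => //; last first.
    by move=> t /linI /segK /K_model.
  apply: continuous_subspaceT => t; apply: continuous_comp; first exact: lin_cont.
  exact: fan_point_continuous.
- move=> s t sI tI /(congr1 phi); rewrite /= gamK // gamK // => /(congr1 snd) /=.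
  by rewrite /lin => /addrI /(mulIf _); apply; rewrite subr_eq0 gt_eqF.
- exists (fun x => ((phi x).2 - lo) / (hi - lo)); split.
    apply: continuous_subspaceT => x; apply: cvgM; last exact: cvg_cst.
    by apply: cvgB; [exact: phi_height_continuous | exact: cvg_cst].
  by move=> t tI; rewrite /= gamK //= /lin; field; rewrite subr_eq0 gt_eqF.
Qed.

(* Parametrizing [A] from its end point [e], the heights of [phi] along [A]
   form an injective path starting strictly between two of its values. *)
Lemma end_point_height_not_between (A : set T) c e xl xh :
  end_points setT e -> Defs.arc A -> A e -> A xl -> A xh ->
  (forall z, A z -> exists s, phi z = fan_point c s) ->
  ~ ((phi xl).2 < (phi e).2 < (phi xh).2).
Proof.
move=> [_ e_end] arcA Ae Axl Axh A_leg.
have [b [gam [[gam_cont [gam_inj _]] [gamA [gam0 _]]]]] := e_end A arcA (fun _ _ => I) Ae.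
pose psi t := (phi (gam t)).2.
have A_gam t : unit_interval t -> A (gam t) by move=> tI; rewrite -gamA; exists t.
have psi_cont : {within `[0, 1], continuous psi}.
  rewrite -unit_intervalE.
  apply: (@within_continuous_comp _ _ _ _ gam (fun x => (phi x).2)) => // z _.
  exact: phi_height_continuous.
have psi_inj : {in `[0, 1] &, injective psi}.
  move=> s t; rewrite !in_itv /= => sI tI.
  have [s' Es] := A_leg _ (A_gam s sI); have [t' Et] := A_leg _ (A_gam t tI).
  rewrite /psi Es Et /= => st; apply: gam_inj => //; apply: phi_inj.
  by rewrite Es Et st.
have [tl tlI <-] : exists2 tl, tl \in `[0, 1] & gam tl = xl.
  by move: Axl; rewrite -gamA => -[tl tlI <-]; exists tl; rewrite ?in_itv.
have [th thI <-] : exists2 th, th \in `[0, 1] & gam th = xh.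
  by move: Axh; rewrite -gamA => -[th thI <-]; exists th; rewrite ?in_itv.
by rewrite -gam0; exact: inj_path_start_not_between psi_cont psi_inj tlI thI.
Qed.

Lemma end_point_off_leg_segment e c lo hi y :
  end_points setT e -> cantor_set c -> 0 <= lo -> lo < y -> y < hi -> hi <= 1 ->
  (forall u, lo <= u <= hi -> K (fan_point c u)) -> phi e <> fan_point c y.
Proof.
move=> e_end cc lo0 loy yhi hi1 segK phie.
have lohi : lo < hi := lt_trans loy yhi.
have [gam [gam_emb gamE]] := leg_segment_arc cc lo0 lohi hi1 segK.
have u0 : @unit_interval R 0 by rewrite /unit_interval /= lexx ler01.
have u1 : @unit_interval R 1 by rewrite /unit_interval /= lexx ler01.
have yI : unit_interval ((y - lo) / (hi - lo)).
  apply/andP; split; first by apply: divr_ge0; lra.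
  by rewrite ler_pdivrMr ?mul1r; lra.
apply: (@end_point_height_not_between (gam @` @unit_interval R) c e (gam 0) (gam 1)).
- exact: e_end.
- by exists (gam 0), (gam 1), gam.
- exists ((y - lo) / (hi - lo)) => //; apply: phi_inj; rewrite gamE // phie.
  by congr fan_point; field; rewrite subr_eq0 gt_eqF.
- by exists 0.
- by exists 1.
- by move=> _ [t tI <-]; exists (lo + t * (hi - lo)); exact: gamE.
- by rewrite phie !gamE //= mul0r addr0 mul1r addrC subrK loy yhi.
Qed.

Lemma K_leg_segment_above c y eps b : cantor_set c -> K (fan_point c y) ->
  0 < eps -> eps < y -> y + eps < b -> b <= 1 ->
  (forall s, y <= s <= b -> s - eps < (rho (fan_point c s)).2) ->
  exists2 y', y < y' <= 1 & forall u, y <= u <= y' -> K (fan_point c u).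
Proof.
move=> cc yK eps0 eps_y eps_b b1 rho_up.
pose p s := rho (fan_point c s).
have yb : y <= b by lra.
have pM s : y <= s <= b -> cantor_fan_model (fan_point c s).
  by move=> sI; apply: fan_point_model => //; lra.
have p_cont : {within `[y, b], continuous p}.
  apply: (continuous_within_comp (B := cantor_fan_model)); last exact: rho_continuous.
    exact/continuous_subspaceT/fan_point_continuous.
  by move=> s; rewrite /= in_itv; exact: pM.
have p_nontop s : y <= s <= b -> p s <> fan_top.
  by move=> sI ps; have := rho_up s sI; rewrite -/(p s) ps /=; lra.
have py : p y = fan_point c y by rewrite /p /= rho_id.
have p_model s : cantor_fan_model (p s) by apply: K_model; exact: rho_K.
have pb_leg : fan_leg (p b) = c.
  rewrite -(path_leg_const yb p_cont (fun s _ => p_model s) p_nontop (t := y)); last lra.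
  by rewrite py fan_legK // gt_eqF //; lra.
exists (p b).2.
  have [_ pb1 _ _] := cantor_fan_model_nontop (p_model b) (p_nontop b ltac:(lra)).
  by have := rho_up b ltac:(lra); lra.
move=> u uI; rewrite -pb_leg; apply: (path_covers_leg K_model yb p_cont) => //.
- by move=> s _; exact: rho_K.
- by move=> s sI; apply: p_nontop; lra.
- lra.
- by rewrite py /=; apply: between_minr_maxr; left; lra.
Qed.

Hypothesis arcwise : arcwise_connected [set: T].

(* An arc of [T] from [xa] to [xb] is mapped to a path in the model ending at
   [phi xb]: either it passes through the top, or it stays in one leg. *)
Lemma arc_covers_leg xa xb : xa <> xb -> phi xb <> fan_top ->
  exists2 m, m = 0 \/ [/\ m = (phi xa).2, phi xa <> fan_top &
                          fan_leg (phi xa) = fan_leg (phi xb)] &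
    forall u, 0 < u -> minr m (phi xb).2 <= u <= maxr m (phi xb).2 ->
      K (fan_point (fan_leg (phi xb)) u).
Proof.
move=> xab xb_top.
have [A [_ [gam [[gam_cont [gam_inj _]] [_ [gam0 gam1]]]]]] := arcwise I I xab.
pose p := phi \o gam.
have p_cont : {within `[0, 1], continuous p}.
  rewrite -unit_intervalE; apply: within_continuous_comp => // z _.
  exact: phi_continuous.
have pK t : K (p t) by exists (gam t).
have p_inj s t : 0 <= s <= 1 -> 0 <= t <= 1 -> p s = p t -> s = t.
  by move=> sI tI /phi_inj; exact: gam_inj.
have p1 : p 1 = phi xb by rewrite /p /= gam1.
have p0 : p 0 = phi xa by rewrite /p /= gam0.
case: (pselect (exists2 t, 0 <= t <= 1 & p t = fan_top)) => [[t tI pt]|no_top].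
  have t1 : t < 1.
    rewrite lt_neqAle (andP tI).2 andbT; apply/eqP => t1; apply: xb_top.
    by rewrite -p1 -t1.
  have sub : `[t, 1] `<=` `[0, 1].
    by move=> s /=; rewrite !in_itv /= => /andP[? ?]; apply/andP; split; lra.
  exists 0; first by left.
  move=> u u0 uI; rewrite -p1.
  apply: (path_covers_leg K_model (ltW t1) (continuous_subspaceW sub p_cont)) => //.
  - by move=> s s1 ps; have := p_inj s t ltac:(lra) tI; rewrite ps pt => /(_ erefl); lra.
  - by rewrite pt p1.
have p_nontop t : 0 <= t <= 1 -> p t <> fan_top by move=> tI pt; apply: no_top; exists t.
have leg := path_leg_const ler01 p_cont (fun t _ => K_model (pK t)) p_nontop.
exists (phi xa).2.
  right; split => //; first by rewrite -p0; apply: p_nontop; lra.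
  by rewrite -p0 -p1; apply: leg; lra.
move=> u u0 uI; rewrite -p1.
apply: (path_covers_leg K_model ler01 p_cont) => //.
- by move=> s sI; apply: p_nontop; lra.
- by rewrite p0 p1.
Qed.

Lemma K_leg_segment_below xa e c a : phi xa = fan_point c a -> 0 < a ->
  phi e <> fan_top -> a < (phi e).2 ->
  forall u, a <= u <= (phi e).2 -> K (fan_point (fan_leg (phi e)) u).
Proof.
move=> xaE a0 e_top a_e.
have xae : xa <> e by move=> xaeE; move: a_e; rewrite -xaeE xaE /= ltxx.
have [m m_le segK] := arc_covers_leg xae e_top.
have {}m_le : m <= a by case: m_le => [->|[-> _ _]]; rewrite ?xaE //; lra.
move=> u uI; apply: segK; first lra.
by apply: between_minr_maxr; left; lra.
Qed.

Hypothesis T_nontrivial : exists x y : T, x <> y.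

Lemma K_has_leg_segment : exists c a b, [/\ cantor_set c, 0 < a, a < b, b <= 1 &
  forall u, a <= u <= b -> K (fan_point c u)].
Proof.
have [xa [xb [xab xb_top]]] : exists xa xb, xa <> xb /\ phi xb <> fan_top.
  have [x [y xy]] := T_nontrivial.
  case: (pselect (phi y = fan_top)) => [y_top|]; last by exists x, y.
  by exists y, x; split=> // x_top; apply: xy; apply: phi_inj; rewrite x_top.
have [m m_cases segK] := arc_covers_leg xab xb_top.
have [yb0 yb1 cb xbE] := cantor_fan_model_nontop (phi_model xb) xb_top.
have [m01 m_yb] : 0 <= m <= 1 /\ m != (phi xb).2.
  case: m_cases => [->|[-> xa_top legE]]; first by split; [lra | rewrite lt_eqF].
  have [ya0 ya1 _ xaE] := cantor_fan_model_nontop (phi_model xa) xa_top.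
  split; first lra.
  by apply/eqP => yE; apply: xab; apply: phi_inj; rewrite xaE xbE legE yE.
exists (fan_leg (phi xb)), ((m + (phi xb).2) / 2).
have [lt_m|le_b] := ltP m (phi xb).2.
  exists (phi xb).2; split; [exact: cb | lra | lra | lra | move=> u uI].
  by apply: segK; [lra | apply: between_minr_maxr; left; lra].
have lt_b : (phi xb).2 < m by rewrite lt_neqAle eq_sym m_yb.
exists m; split; [exact: cb | lra | lra | lra | move=> u uI].
by apply: segK; [lra | apply: between_minr_maxr; right; lra].
Qed.

Hypothesis end_points_dense : closure (end_points [set: T]) = [set: T].

Lemma end_point_near_leg x c y : y != 0 -> phi x = fan_point c y ->
  forall d eps, 0 < d -> 0 < eps -> exists e,
    [/\ end_points setT e, `|c - fan_leg (phi e)| < d & `|y - (phi e).2| < eps].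
Proof.
move=> y0 xE d eps d0 eps0.
have leg_cvg : fan_leg (phi t) @[t --> x] --> c.
  have phi_cvg : phi t @[t --> x] --> phi x by exact: phi_continuous.
  have leg_at : fan_leg z @[z --> phi x] --> c.
    by rewrite xE -{2}(fan_legK c y0); exact: (@fan_leg_continuous R (fan_point c y) y0).
  exact: cvg_comp phi_cvg leg_at.
have height_cvg : (phi t).2 @[t --> x] --> y.
  by rewrite -[y]/((fan_point c y).2) -xE; exact: phi_height_continuous.
have near_leg : \forall t \near x, `|c - fan_leg (phi t)| < d.
  by have := cvgr_dist_lt _ _ leg_cvg _ d0; apply; exact: nbhs_filter.
have near_height : \forall t \near x, `|y - (phi t).2| < eps.
  by have := cvgr_dist_lt _ _ height_cvg _ eps0; apply; exact: nbhs_filter.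
have x_cl : closure (end_points [set: T]) x by rewrite end_points_dense.
have [e [e_end [/= e_leg e_height]]] := x_cl _ (filterI near_leg near_height).
by exists e.
Qed.

Lemma no_retraction : False.
Proof.
have [c [a [b [cc a0 ab b1 segK]]]] := K_has_leg_segment.
pose y := (a + b) / 2; pose eps := (b - a) / 4.
have eps0 : 0 < eps by rewrite /eps; lra.
have rho_height_cont : {within cantor_fan_model, continuous (snd \o rho)}.
  apply: within_continuous_comp; last exact: rho_continuous.
  by move=> z _; exact: cvg_snd.
have [d d0 rho_near] := fan_height_uniform rho_height_cont cc (ltW a0) b1
  (fun s sI => congr1 snd (rho_id (segK s sI))) eps0.
have [x _ xE] : K (fan_point c y) by apply: segK; rewrite /y; lra.
have y0 : y != 0 by rewrite /y; apply: lt0r_neq0; lra.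
have [e [e_end e_leg e_height]] := end_point_near_leg y0 xE d0 eps0.
have [ye_lo ye_hi] : a + eps < (phi e).2 /\ (phi e).2 + eps < b.
  by move: e_height; rewrite ltr_distlC /y /eps; lra.
have e_top : phi e <> fan_top by move=> eE; move: ye_lo; rewrite eE /=; lra.
have [_ _ c'C eE] := cantor_fan_model_nontop (phi_model e) e_top.
have [xa _ xaE] : K (fan_point c a) by apply: segK; lra.
have below := K_leg_segment_below xaE a0 e_top ltac:(lra).
have [y' /andP[ye_y' y'1] above] : exists2 y', (phi e).2 < y' <= 1 &
    forall u, (phi e).2 <= u <= y' -> K (fan_point (fan_leg (phi e)) u).
  apply: (K_leg_segment_above c'C _ eps0 _ ye_hi b1); first by rewrite -eE; exists e.
    lra.
  move=> s sI; have := rho_near _ c'C e_leg s ltac:(lra); rewrite ltr_distlC /=; lra.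
apply: (end_point_off_leg_segment e_end c'C (ltW a0) _ ye_y' _ _ eE); try lra.
by move=> u uI; case: (lerP u (phi e).2) => ue; [apply: below | apply: above]; lra.
Qed.

End RetractionInModel.

Theorem mainTheorem6 (R : realType) (T : pseudoMetricType R)
  (hT : hausdorff_space T) (C : set T) (f : T -> T) :
  lelek_fan [set: T] ->
  continuum C -> @cantor_fan R T C ->
  embed_on [set: T] f -> range f `<=` C ->
  ~ (exists r : T -> T, continuous r /\ range r `<=` range f /\
       (forall y, range f y -> r y = y)).
Proof.
move=> [[[[_ [arcwise _]] _] [v [v_ram _]]] end_dense] _ [g [[g_cont [_ [g' [g'_cont gK]]]] gC]].
move=> [f_cont [_ [f' [f'_cont f'K]]]] f_sub [r [r_cont [r_sub r_id]]].
have T_nontrivial : exists x y : T, x <> y.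
  have [a1 [_ [_ [A1 [_ [_ [[A1a _ _] _]]]]]]] := v_ram.
  by exists v, a1; exact: arc_from_neq A1a.
apply: (no_retraction g_cont gK g'_cont _ _ f'_cont _ r_cont r_sub r_id arcwise
  T_nontrivial end_dense).
- by apply/continuous_subspace_setT.
- by move=> x; apply: f'K.
- by rewrite gC.
Qed.
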